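(* Let $H$ be a real or complex Hilbert space of dimension $n$, let $N\ge n$, let $\{q_i\}_{i=1}^N$ be a weight number sequence, and let $F=\{f_i\}_{i=1}^N$ be a probabilistic uniform Parseval frame for $H$. Then its canonical dual is the unique 1-erasure probabilistic optimal dual of $F$, and therefore it is an $m$-erasure probabilistic optimal dual of $F$ for every $m$.
   Context: Inner products are linear in the first argument. A frame $F=\{f_i\}_{i=1}^N$ for $H$ is Parseval if $\sum_i|\langle f,f_i\rangle|^2=\|f\|^2$ for all $f$. A probabilistic uniform Parseval frame is a Parseval frame with $\|f_i\|^2=1/q_i$ for all $i$. Frame operator: $S_F=\Theta_F^*\Theta_F$, where $\Theta_Ff=(\langle f,f_i\rangle)_i$. The canonical dual is $\{S_F^{-1}f_i\}$. A dual of $F$ is a frame $G=\{g_i\}_{i=1}^N$ with $f=\sum_i\langle f,f_i\rangle g_i=\sum_i\langle f,g_i\rangle f_i$ for all $f$. A probability sequence satisfies $0\le p_i\le1$ and $\sum p_i=1$. Weight numbers: $q_i=\frac{\sum_jp_j}{\sum_jp_j-p_i}\cdot\frac{N-1}{n}$ (assumed well defined). For $1\le m\le N$, $\mathcal{D}_m^p$ is the set of $N\times N$ diagonal matrices $D$ for which there is $\Lambda$ with $|\Lambda|=m$, $D_{ii}=q_i$ for $i\in\Lambda$ and $0$ otherwise. $d_m^p(F,G)=\max\{\|\Theta_G^*D\Theta_F\|:D\in\mathcal{D}_m^p\}$ (operator norm), where $\Theta_G^*(c)=\sum_ic_ig_i$. Optimal duals are defined recursively: - $G$ is a 1-erasure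 probabilistic optimal dual of $F$ if $d_1^p(F,G)=\inf\{d_1^p(F,G'):G'\text{ a dual of }F\}$; - for $m\ge2$, $G$ is an $m$-erasure probabilistic optimal dual if it is an $(m-1)$-erasure probabilistic optimal dual and $d_m^p(F,G)=\inf\{d_m^p(F,G'):G'\text{ an }(m-1)\text{-erasure probabilistic optimal dual of }F\}$. *)

(* Scalars live in C := R[i] for an
   arbitrary R : realType; the real Hilbert space R^n is realized as the
   vectors of C^n with real entries. *)
From HB Require Import structures.
From mathcomp Require Import all_boot all_order all_algebra.
From mathcomp Require Import complex.
From mathcomp Require Import boolp classical_sets reals.
Set Implicit Arguments. Unset Strict Implicit. Unset Printing Implicit Defensive.
Import Order.TTheory GRing.Theory Num.Theory.
Local Open Scope ring_scope.
Local Open Scope complex_scope.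
Local Open Scope classical_set_scope.

Section Frames.
Variable R : realType.
Local Notation C := R[i].

Definition scal (isreal : bool) : pred C :=
  fun z => if isreal then complex.Im z == 0 else true.

Definition inH (isreal : bool) (n : nat) (x : 'cV[C]_n) : Prop :=
  forall k, scal isreal (x k 0).

Definition inner (n : nat) (x y : 'cV[C]_n) : C :=
  \sum_k x k 0 * Num.conj (y k 0).

Definition normv (n : nat) (x : 'cV[C]_n) : R :=
  Num.sqrt (complex.Re (inner x x)).

Definition opnorm (isreal : bool) (n : nat) (A : 'M[C]_n) : R :=
  sup [set r : R | exists f : 'cV[C]_n,
         [/\ inH isreal f, normv f <= 1 & r = normv (A *m f)]].

Definition is_frame (isreal : bool) (n N : nat) (F : 'I_N -> 'cV[C]_n) : Prop :=
  (forall i, inH isreal (F i)) /\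
  exists A B : R, [/\ 0 < A, A <= B &
    forall f, inH isreal f ->
      (A * normv f ^+ 2)%:C <= \sum_i `|inner f (F i)| ^+ 2
        <= (B * normv f ^+ 2)%:C].

Definition parseval_frame (isreal : bool) (n N : nat) (F : 'I_N -> 'cV[C]_n) :=
  is_frame isreal F /\
  forall f, inH isreal f -> \sum_i `|inner f (F i)| ^+ 2 = ((normv f) ^+ 2)%:C.

Definition probability_seq (N : nat) (p : 'I_N -> R) : Prop :=
  (forall i, 0 <= p i <= 1) /\ \sum_i p i = 1.

Definition weight_numbers (n N : nat) (p : 'I_N -> R) (q : 'I_N -> R) : Prop :=
  forall i, q i = (\sum_j p j) / (\sum_j p j - p i) * ((N - 1)%:R / n%:R).

Definition prob_uniform_parseval (isreal : bool) (n N : nat) (q : 'I_N -> R)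
  (F : 'I_N -> 'cV[C]_n) : Prop :=
  parseval_frame isreal F /\ forall i, normv (F i) ^+ 2 = (q i)^-1.

(* analysis operator Theta_F f = (<f,f_i>)_i *)
Definition Theta (n N : nat) (F : 'I_N -> 'cV[C]_n) : 'M[C]_(N, n) :=
  \matrix_(i, k) Num.conj (F i k 0).

Definition ThetaS (n N : nat) (G : 'I_N -> 'cV[C]_n) : 'M[C]_(n, N) :=
  \matrix_(k, i) G i k 0.

Definition frame_op (n N : nat) (F : 'I_N -> 'cV[C]_n) : 'M[C]_n :=
  ThetaS F *m Theta F.

Definition canonical_dual (n N : nat) (F : 'I_N -> 'cV[C]_n) : 'I_N -> 'cV[C]_n :=
  fun i => invmx (frame_op F) *m F i.

Definition is_dual (isreal : bool) (n N : nat) (F G : 'I_N -> 'cV[C]_n) : Prop :=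
  is_frame isreal G /\
  forall f, inH isreal f ->
    f = \sum_i inner f (F i) *: G i /\ f = \sum_i inner f (G i) *: F i.

Definition Dmat (N : nat) (q : 'I_N -> R) (L : {set 'I_N}) : 'M[C]_N :=
  diag_mx (\row_i (if i \in L then (q i)%:C else 0)).

Definition dmp (isreal : bool) (n N : nat) (q : 'I_N -> R) (m : nat)
  (F G : 'I_N -> 'cV[C]_n) : R :=
  \big[Num.max/0]_(L : {set 'I_N} | #|L| == m)
     opnorm isreal (ThetaS G *m Dmat q L *m Theta F).

Fixpoint opt_dual (isreal : bool) (n N : nat) (q : 'I_N -> R)
  (F : 'I_N -> 'cV[C]_n) (m : nat) (G : 'I_N -> 'cV[C]_n) : Prop :=
  match m with
  | 0 => is_dual isreal F G
  | m'.+1 => opt_dual isreal q F m' G /\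
      dmp isreal q m F G =
        inf [set r : R | exists G', opt_dual isreal q F m' G' /\
                                    r = dmp isreal q m F G']
  end.

End Frames.

From HB Require Import structures.
From mathcomp Require Import all_boot all_order all_algebra.
From mathcomp Require Import complex reals boolp classical_sets.
From mathcomp Require Import ring.
Import Order.TTheory GRing.Theory Num.Theory.
Local Open Scope ring_scope.
Set Implicit Arguments. Unset Strict Implicit. Unset Printing Implicit Defensive.

(* A Parseval frame has the identity as frame operator, so it is its own
   canonical dual, and the erasure operator of a single index i is the rank-one
   map f |-> q_i <f, f_i> g_i, of norm q_i |f_i| |g_i|.  As q_i |f_i|^2 = 1
   (the weight-number formula only serves to exclude q_i = 0), d_1(F, F) = 1.
   If a dual G had d_1(F, G) <= 1, then |g_i| <= |f_i| for all i; since
   \sum_i <f_i, g_i> = n = \sum_i |f_i|^2 (both are traces of the identity),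
   \sum_i |f_i - g_i|^2 = \sum_i (|g_i|^2 - |f_i|^2) <= 0, so G = F.  Hence F is
   the unique 1-erasure optimal dual, and a unique optimal dual remains optimal
   at every further level. *)

Section Frames.
Variable R : realType.
Local Notation C := R[i].

Lemma innerDl n (x y z : 'cV[C]_n) : inner (x + y) z = inner x z + inner y z.
Proof. by rewrite /inner -big_split; apply: eq_bigr => k _; rewrite mxE mulrDl. Qed.

Lemma innerZl n (c : C) (x z : 'cV[C]_n) : inner (c *: x) z = c * inner x z.
Proof. by rewrite /inner mulr_sumr; apply: eq_bigr => k _; rewrite mxE mulrA. Qed.

Lemma innerNl n (x z : 'cV[C]_n) : inner (- x) z = - inner x z.
Proof. by rewrite -scaleN1r innerZl mulN1r. Qed.

Lemma inner_conj n (x y : 'cV[C]_n) : inner y x = Num.conj (inner x y).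
Proof.
by rewrite /inner rmorph_sum; apply: eq_bigr => k _; rewrite rmorphM /= conjCK mulrC.
Qed.

Lemma innerDr n (x y z : 'cV[C]_n) : inner z (x + y) = inner z x + inner z y.
Proof. by rewrite inner_conj innerDl rmorphD /= -!inner_conj. Qed.

Lemma innerZr n (c : C) (x z : 'cV[C]_n) : inner z (c *: x) = Num.conj c * inner z x.
Proof. by rewrite inner_conj innerZl rmorphM /= -inner_conj. Qed.

Lemma innerNr n (x z : 'cV[C]_n) : inner z (- x) = - inner z x.
Proof. by rewrite inner_conj innerNl rmorphN /= -inner_conj. Qed.

Lemma inner_ge0 n (x : 'cV[C]_n) : 0 <= inner x x.
Proof. by apply: sumr_ge0 => k _; rewrite -normCK exprn_ge0. Qed.

Lemma inner_eq0 n (x : 'cV[C]_n) : inner x x = 0 -> x = 0.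
Proof.
move=> x0; apply/matrixP => k j; rewrite (ord1 j) mxE.
have sq_ge0 l : 0 <= x l 0 * Num.conj (x l 0) by rewrite -normCK exprn_ge0.
have /eqP := @psumr_eq0P _ _ xpredT _ (fun l _ => sq_ge0 l) x0 k isT.
by rewrite -normCK sqrf_eq0 normr_eq0 => /eqP.
Qed.

Lemma normvE n (x : 'cV[C]_n) : (normv x ^+ 2)%:C%C = inner x x.
Proof.
have x0 := inner_ge0 x.
have Re_x : (complex.Re (inner x x))%:C%C = inner x x.
  by rewrite complexRe; apply/Creal_ReP/ger0_real.
by rewrite /normv sqr_sqrtr // -ler0c Re_x.
Qed.

Lemma normv_ge0 n (x : 'cV[C]_n) : 0 <= normv x.
Proof. exact: sqrtr_ge0. Qed.

Lemma normv_le_of_inner n (x : 'cV[C]_n) (t : R) : 0 <= t ->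
  inner x x <= (t ^+ 2)%:C%C -> normv x <= t.
Proof. by move=> t0; rewrite -normvE lecR ler_pXn2r // nnegrE normv_ge0. Qed.

Lemma ler_normv n (x y : 'cV[C]_n) :
  (normv x <= normv y) = (inner x x <= inner y y).
Proof. by rewrite -!normvE lecR ler_pXn2r // nnegrE normv_ge0. Qed.

Lemma normv_eq_of_inner n (x : 'cV[C]_n) (t : R) : 0 <= t ->
  inner x x = (t ^+ 2)%:C%C -> normv x = t.
Proof.
by move=> t0; rewrite -normvE => /complexI/eqP; rewrite eqrXn2 ?normv_ge0 // => /eqP.
Qed.

Lemma normv0 n : normv (0 : 'cV[C]_n) = 0.
Proof.
by apply: normv_eq_of_inner; rewrite // expr0n /inner big1 // => k _; rewrite mxE mul0r.
Qed.

Lemma conj_realC (r : R) : Num.conj (r%:C%C : C) = r%:C%C.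
Proof. by apply: conj_Creal; rewrite complex_real. Qed.

Lemma normvZ n (s : R) (v : 'cV[C]_n) : 0 <= s -> normv (s%:C%C *: v) = s * normv v.
Proof.
move=> s0; apply: normv_eq_of_inner; first by rewrite mulr_ge0 ?normv_ge0.
by rewrite innerZl innerZr conj_realC -normvE -!rmorphM /=; congr (_%:C)%C; ring.
Qed.

Lemma inner_Cauchy_Schwarz n (x y : 'cV[C]_n) :
  inner x y * Num.conj (inner x y) <= inner x x * inner y y.
Proof.
have [y0|y_neq0] := eqVneq (inner y y) 0.
  rewrite (inner_eq0 y0) /inner big1 ?mul0r ?mulr0 ?mulr_ge0 ?inner_ge0 //.
  by move=> k _; rewrite mxE rmorph0 mulr0.
have y_gt0 : 0 < inner y y by rewrite lt_def y_neq0 inner_ge0.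
have y_conj : Num.conj (inner y y) = inner y y by apply/conj_Creal/gtr0_real.
have := inner_ge0 (inner y y *: x + (- inner x y) *: y).
rewrite !innerDl !innerDr !innerZl !innerZr (inner_conj x y) y_conj rmorphN /=.
set a := inner x x; set b := inner y y; set c := inner x y.
have -> : b * (b * a) + b * (- Num.conj c * c) +
    (- c * (b * Num.conj c) + - c * (- Num.conj c * b)) = b * (b * a - c * Num.conj c).
  by ring.
by rewrite pmulr_rge0 // subr_ge0 [a * b]mulrC.
Qed.

Definition basisv n (k : 'I_n) : 'cV[C]_n := delta_mx k 0.

Lemma inner_basisv_l n (k : 'I_n) v : inner (basisv k) v = Num.conj (v k 0).
Proof.
rewrite /inner (bigD1 k) //= big1 ?addr0 => [|j /negbTE jk].
  by rewrite mxE !eqxx mul1r.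
by rewrite mxE jk mul0r.
Qed.

Lemma inner_basisv n (k l : 'I_n) : inner (basisv k) (basisv l) = (k == l)%:R.
Proof. by rewrite inner_basisv_l mxE eqxx andbT rmorph_nat eq_sym. Qed.

Lemma inH_basisv isreal n (k : 'I_n) : inH isreal (basisv k).
Proof. by move=> j; rewrite /scal; case: isreal => //; rewrite mxE; case: (_ && _). Qed.

Lemma inH0 isreal n : inH isreal (0 : 'cV[C]_n).
Proof. by move=> k; rewrite /scal mxE; case: isreal. Qed.

Lemma inHD isreal n (x y : 'cV[C]_n) :
  inH isreal x -> inH isreal y -> inH isreal (x + y).
Proof.
move=> hx hy j; move: (hx j) (hy j); rewrite /scal mxE; case: isreal hx hy => // _ _.
by case: (x j 0) => a b; case: (y j 0) => c d /= /eqP -> /eqP ->; rewrite addr0.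
Qed.

Lemma inHZ isreal n (r : R) (x : 'cV[C]_n) : inH isreal x -> inH isreal (r%:C%C *: x).
Proof.
move=> hx j; move: (hx j); rewrite /scal mxE; case: isreal hx => // _.
by case: (x j 0) => a b /= /eqP ->; rewrite mulr0 mul0r addr0.
Qed.

Lemma Theta_mulmx n N (F : 'I_N -> 'cV[C]_n) f i : (Theta F *m f) i 0 = inner f (F i).
Proof. by rewrite mxE /inner; apply: eq_bigr => k _; rewrite mxE mulrC. Qed.

Lemma ThetaS_mulmx n N (G : 'I_N -> 'cV[C]_n) (c : 'cV[C]_N) :
  ThetaS G *m c = \sum_i c i 0 *: G i.
Proof.
apply/matrixP => k j; rewrite (ord1 j) mxE summxE; apply: eq_bigr => i _.
by rewrite !mxE mulrC.
Qed.

Lemma frame_op_mulmx n N (F : 'I_N -> 'cV[C]_n) f :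
  frame_op F *m f = \sum_i inner f (F i) *: F i.
Proof.
by rewrite -mulmxA ThetaS_mulmx; apply: eq_bigr => i _; rewrite Theta_mulmx.
Qed.

(* The sum is the trace of the identity operator [f |-> \sum_i <f, g_i> f_i]. *)
Lemma dual_trace isreal n N (F G : 'I_N -> 'cV[C]_n) :
  (forall f, inH isreal f -> f = \sum_i inner f (G i) *: F i) ->
  \sum_i inner (F i) (G i) = n%:R.
Proof.
move=> recG; rewrite /inner exchange_big /= -[n in n%:R]card_ord -sumr_const.
apply: eq_bigr => k _.
have /(congr1 (fun v : 'cV[C]_n => v k 0)) := recG _ (inH_basisv isreal k).
rewrite /= mxE !eqxx /= => E; rewrite [RHS]E summxE.
by apply: eq_bigr => i _; rewrite mxE inner_basisv_l mulrC.
Qed.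

Section ParsevalFrame.
Variables (isreal : bool) (n N : nat) (F : 'I_N -> 'cV[C]_n).
Hypothesis inH_F : forall i, inH isreal (F i).
Hypothesis parseval_F : forall f, inH isreal f ->
  \sum_i `|inner f (F i)| ^+ 2 = (normv f ^+ 2)%:C%C.

Definition analysis_form (f g : 'cV[C]_n) :=
  \sum_i inner f (F i) * Num.conj (inner g (F i)).

Lemma analysis_formDZ x y c : analysis_form (x + c *: y) (x + c *: y) =
  analysis_form x x + c * Num.conj c * analysis_form y y
  + Num.conj c * analysis_form x y + c * analysis_form y x.
Proof.
rewrite /analysis_form !mulr_sumr -!big_split; apply: eq_bigr => i _ /=.
by rewrite innerDl innerZl rmorphD rmorphM /=; ring.
Qed.

Lemma analysis_form_diag f : inH isreal f -> analysis_form f f = inner f f.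
Proof.
by move=> hf; rewrite -normvE -parseval_F //; apply: eq_bigr => i _; rewrite normCK.
Qed.

Lemma analysis_form_basis_polar (k l : 'I_n) c : k != l ->
  inH isreal (basisv k + c *: basisv l) ->
  Num.conj c * analysis_form (basisv k) (basisv l)
  + c * analysis_form (basisv l) (basisv k) = 0.
Proof.
have [inH_k inH_l] := (inH_basisv isreal k, inH_basisv isreal l).
move=> kl /analysis_form_diag; rewrite analysis_formDZ !analysis_form_diag //.
rewrite innerDl !innerDr !innerZl !innerZr !inner_basisv !eqxx.
rewrite (negbTE kl) eq_sym (negbTE kl) /= !mulr0 !mulr1 !addr0 add0r.
rewrite [_ * Num.conj c]mulrC -!addrA => /addrI/eqP.
by rewrite addrC -subr_eq0 addrK => /eqP.
Qed.

Lemma analysis_form_basis_sym (k l : 'I_n) : k != l ->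
  analysis_form (basisv l) (basisv k) = analysis_form (basisv k) (basisv l).
Proof.
case: isreal inH_F analysis_form_basis_polar => [realF _ | _ polar] kl.
  rewrite /analysis_form; apply: eq_bigr => i _.
  rewrite !inner_basisv_l conjCK mulrC.
  have conj_Fi j : Num.conj (F i j 0) = F i j 0.
    move: (realF i j); rewrite /scal.
    by case: (F i j 0) => a b /= /eqP ->; exact: conj_realC.
  by rewrite !conj_Fi.
have /eqP := polar k l 'i kl (fun _ => isT).
rewrite conjCi mulNr addrC subr_eq0 => /eqP /mulfI; apply; exact: neq0Ci.
Qed.

Lemma analysis_form_basis_off (k l : 'I_n) :
  k != l -> analysis_form (basisv k) (basisv l) = 0.
Proof.
move=> kl; have := analysis_form_basis_polar (c := 1) kl.
have inH_kl := inHD (inH_basisv isreal k) (inHZ 1 (inH_basisv isreal l)).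
rewrite rmorph1 !mul1r (analysis_form_basis_sym kl) => /(_ inH_kl)/eqP.
by rewrite -mulr2n mulrn_eq0 /= => /eqP.
Qed.

Lemma frame_op_parseval : frame_op F = 1%:M.
Proof.
apply/matrixP => k l; rewrite !mxE.
have -> : \sum_j ThetaS F k j * Theta F j l = analysis_form (basisv l) (basisv k).
  by apply: eq_bigr => i _; rewrite !mxE !inner_basisv_l conjCK mulrC.
have [<-|kl] := eqVneq k l; last by rewrite analysis_form_basis_off // eq_sym.
by rewrite analysis_form_diag ?inner_basisv ?eqxx //; apply: inH_basisv.
Qed.

Lemma canonical_dual_parseval : canonical_dual F = F.
Proof.
by apply: funext => i; rewrite /canonical_dual frame_op_parseval invmx1 mul1mx.
Qed.

Lemma parseval_reconstruction f : \sum_i inner f (F i) *: F i = f.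
Proof. by rewrite -frame_op_mulmx frame_op_parseval mul1mx. Qed.

Lemma parseval_dual_eq (G : 'I_N -> 'cV[C]_n) :
  (forall f, inH isreal f -> f = \sum_i inner f (G i) *: F i) ->
  (forall i, normv (G i) <= normv (F i)) -> G = F.
Proof.
move=> recG G_le; apply: funext => i.
have traceFF :=
  dual_trace (isreal := isreal) (fun f _ => esym (parseval_reconstruction f)).
have traceFG := dual_trace recG.
have traceGF : \sum_i inner (G i) (F i) = n%:R.
  rewrite (eq_bigr _ (fun i _ => inner_conj (F i) (G i))) -rmorph_sum.
  by rewrite traceFG rmorph_nat.
have dist_le0 : \sum_i inner (F i - G i) (F i - G i) <= 0.
  have expand j : inner (F j - G j) (F j - G j) =
      (inner (G j) (G j) - inner (F j) (F j))
      + (inner (F j) (F j) + inner (F j) (F j) - inner (F j) (G j) - inner (G j) (F j)).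
    by rewrite innerDl !innerDr !innerNl !innerNr; ring.
  rewrite (eq_bigr _ (fun j _ => expand j)) big_split /= !sumrB big_split /=.
  rewrite traceFF traceFG traceGF addrK subrr addr0 subr_le0 -traceFF.
  by apply: ler_sum => j _; rewrite -ler_normv.
have dist_ge0 j : xpredT j -> 0 <= inner (F j - G j) (F j - G j) by rewrite inner_ge0.
have dist0 : \sum_i inner (F i - G i) (F i - G i) = 0.
  by apply/le_anti; rewrite dist_le0 sumr_ge0.
have /inner_eq0/eqP := @psumr_eq0P _ _ _ _ dist_ge0 dist0 i isT.
by rewrite subr_eq0 => /eqP.
Qed.

End ParsevalFrame.

Lemma Dmat1_mulmx n N (F G : 'I_N -> 'cV[C]_n) (q : 'I_N -> R) i f :
  (ThetaS G *m Dmat q [set i] *m Theta F) *m f = ((q i)%:C%C * inner f (F i)) *: G i.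
Proof.
rewrite -!mulmxA ThetaS_mulmx (bigD1 i) //= big1 ?addr0 => [|j /negbTE ji].
  by rewrite mul_diag_mx mxE Theta_mulmx !mxE finset.in_set1 eqxx.
by rewrite mul_diag_mx !mxE finset.in_set1 ji mul0r scale0r.
Qed.

Lemma normv_rank1_le n (r : R) (f w v : 'cV[C]_n) : 0 <= r -> normv f <= 1 ->
  normv ((r%:C%C * inner f w) *: v) <= r * normv w * normv v.
Proof.
move=> r0 f_le1; apply: normv_le_of_inner; first by rewrite !mulr_ge0 ?normv_ge0.
have -> : ((r * normv w * normv v) ^+ 2)%:C%C =
    (r%:C%C * r%:C%C) * inner w w * inner v v.
  by rewrite -!normvE -!rmorphM /=; congr (_%:C)%C; ring.
rewrite innerZl innerZr rmorphM /= conj_realC mulrA.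
apply: ler_wpM2r; first exact: inner_ge0.
rewrite mulrACA; apply: ler_wpM2l; first by rewrite mulr_ge0 ?ler0c.
apply: le_trans (inner_Cauchy_Schwarz f w) _; apply: ler_piMl; first exact: inner_ge0.
by rewrite -normvE -(rmorph1 (real_complex R)) lecR exprn_ile1 ?normv_ge0.
Qed.

Lemma opnorm_rank1 isreal n (A : 'M[C]_n) (w v : 'cV[C]_n) (r : R) :
  0 <= r -> inH isreal w -> (forall f, A *m f = (r%:C%C * inner f w) *: v) ->
  opnorm isreal A = r * normv w * normv v.
Proof.
move=> r0 inH_w A_rank1; rewrite /opnorm; set E := (X in sup X).
have ubE : ubound E (r * normv w * normv v).
  by move=> _ [f [_ f_le1 ->]]; rewrite A_rank1 normv_rank1_le.
have inE : E (r * normv w * normv v).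
  have [w0|w_neq0] := eqVneq (normv w) 0.
    by exists 0; rewrite normv0 mulmx0 normv0 w0 mulr0 mul0r; split => //; exact: inH0.
  exists ((normv w)^-1%:C%C *: w); split; first exact: inHZ.
    by rewrite normvZ ?invr_ge0 ?normv_ge0 // mulVf.
  rewrite A_rank1 innerZl -normvE -!rmorphM /= normvZ; last first.
    by rewrite !mulr_ge0 ?invr_ge0 ?exprn_ge0 ?normv_ge0.
  by rewrite expr2 mulKf.
apply/le_anti/andP; split; first by apply: ge_sup => //; exists (r * normv w * normv v).
by apply: ub_le_sup => //; exists (r * normv w * normv v).
Qed.

Lemma le_dmp1 isreal n N (F G : 'I_N -> 'cV[C]_n) (q : 'I_N -> R) i :
  0 <= q i -> inH isreal (F i) ->
  q i * normv (F i) * normv (G i) <= dmp isreal q 1 F G.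
Proof.
move=> q_ge0 inH_Fi; rewrite -(opnorm_rank1 q_ge0 inH_Fi (Dmat1_mulmx F G q i)).
by apply: (@le_bigmax_cond _ _ _ _ [set i] (fun L => #|L| == 1%N)); rewrite cards1.
Qed.

Lemma dmp1_le isreal n N (F G : 'I_N -> 'cV[C]_n) (q : 'I_N -> R) x :
  0 <= x -> (forall i, 0 <= q i) -> (forall i, inH isreal (F i)) ->
  (forall i, q i * normv (F i) * normv (G i) <= x) -> dmp isreal q 1 F G <= x.
Proof.
move=> x_ge0 q_ge0 inH_F le_x; apply/bigmax_leP; split => // L /cards1P [i ->].
by rewrite (opnorm_rank1 (q_ge0 i) (inH_F i) (Dmat1_mulmx F G q i)).
Qed.

Lemma opt_dualW isreal n N (q : 'I_N -> R) (F G : 'I_N -> 'cV[C]_n) k m :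
  (k <= m)%N -> opt_dual isreal q F m G -> opt_dual isreal q F k G.
Proof.
elim: m => [|m IH]; first by rewrite leqn0 => /eqP ->.
by rewrite leq_eqVlt ltnS => /orP [/eqP -> // | /IH optk [/optk]].
Qed.

Lemma opt_dual_succ_unique isreal n N (q : 'I_N -> R) (F G0 : 'I_N -> 'cV[C]_n) k :
  opt_dual isreal q F k G0 -> (forall G, opt_dual isreal q F k G -> G = G0) ->
  opt_dual isreal q F k.+1 G0.
Proof.
move=> optG0 uniqG0; split => //.
suff -> : [set r : R | exists G,
    opt_dual isreal q F k G /\ r = dmp isreal q k.+1 F G]%classic
    = [set dmp isreal q k.+1 F G0]%classic by rewrite inf1.
apply/seteqP; split => r; first by move=> [G [/uniqG0 -> ->]].
by move=> ->; exists G0.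
Qed.

Lemma opt_dual_of_unique1 isreal n N (q : 'I_N -> R) (F G0 : 'I_N -> 'cV[C]_n) :
  opt_dual isreal q F 1 G0 -> (forall G, opt_dual isreal q F 1 G -> G = G0) ->
  forall m, opt_dual isreal q F m.+1 G0.
Proof.
move=> optG0 uniqG0; elim => [//|m IH].
by apply: opt_dual_succ_unique => // G optG; apply/uniqG0/(opt_dualW _ optG).
Qed.

Section UniformParseval.
Variables (isreal : bool) (n N : nat) (q : 'I_N -> R) (F : 'I_N -> 'cV[C]_n).
Hypothesis parseval_F : parseval_frame isreal F.
Hypothesis weight_F : forall i, q i * normv (F i) ^+ 2 = 1.
Hypothesis N_gt0 : (0 < N)%N.

Let inH_F : forall i, inH isreal (F i) := parseval_F.1.1.

Lemma normvF_gt0 i : 0 < normv (F i).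
Proof.
rewrite lt_def normv_ge0 andbT; apply/eqP => F0.
by have /eqP := weight_F i; rewrite F0 expr0n mulr0 eq_sym oner_eq0.
Qed.

Lemma weight_gt0 i : 0 < q i.
Proof. by rewrite -[q i]invrK (mulr1_eq (weight_F i)) invr_gt0 exprn_gt0 ?normvF_gt0. Qed.

Lemma weight_normvF i : q i * normv (F i) * normv (F i) = 1.
Proof. by rewrite -mulrA -expr2 weight_F. Qed.

Lemma is_dual_self : is_dual isreal F F.
Proof.
split=> [|f _]; first exact: parseval_F.1.
by rewrite (parseval_reconstruction inH_F parseval_F.2).
Qed.

Lemma dmp1_self : dmp isreal q 1 F F = 1.
Proof.
apply/le_anti/andP; split.
  by apply: dmp1_le => // i; rewrite ?weight_normvF // ltW ?weight_gt0.
by rewrite -(weight_normvF (Ordinal N_gt0)) le_dmp1 ?ltW ?weight_gt0.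
Qed.

Lemma dual_eq_of_dmp1_le1 G : is_dual isreal F G -> dmp isreal q 1 F G <= 1 -> G = F.
Proof.
move=> [_ dualG] dmp_le1; apply: (parseval_dual_eq inH_F parseval_F.2).
  by move=> f /dualG [].
move=> i; have := le_trans (le_dmp1 G (ltW (weight_gt0 i)) (inH_F i)) dmp_le1.
by rewrite -(weight_normvF i) ler_pM2l // mulr_gt0 ?weight_gt0 ?normvF_gt0.
Qed.

Lemma dmp1_dual_ge1 G : is_dual isreal F G -> 1 <= dmp isreal q 1 F G.
Proof.
move=> dualG; rewrite leNgt; apply/negP => dmp_lt1.
have GF := dual_eq_of_dmp1_le1 dualG (ltW dmp_lt1).
by move: dmp_lt1; rewrite GF dmp1_self ltxx.
Qed.

Lemma opt_dual1_self : opt_dual isreal q F 1 F.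
Proof.
split; first exact: is_dual_self.
rewrite dmp1_self /=; set E := (X in inf X).
have lbE : lbound E 1 by move=> _ [G [dualG ->]]; exact: dmp1_dual_ge1.
have F_in_E : E 1 by exists F; split; [exact: is_dual_self | rewrite dmp1_self].
apply/le_anti/andP; split; first by apply: lb_le_inf lbE; exists 1.
by apply: ge_inf F_in_E; exists 1.
Qed.

Lemma opt_dual1_eq G : opt_dual isreal q F 1 G -> G = F.
Proof.
move=> [dualG dmpG]; apply: dual_eq_of_dmp1_le1 => //.
by rewrite dmpG -opt_dual1_self.2 dmp1_self.
Qed.

End UniformParseval.

Lemma one_lt_card_of_sum_sub_neq0 (N : nat) (p : 'I_N -> R) :
  (forall i, \sum_j p j - p i != 0) -> 'I_N -> (1 < N)%N.
Proof.
case: N p => [|[|N]] p p_neq i //; first by case: i.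
by have := p_neq i; rewrite big_ord1 (ord1 i) subrr eqxx.
Qed.

Lemma weight_numbers_neq0 n N (p q : 'I_N -> R) :
  (0 < n)%N -> \sum_j p j = 1 -> (forall i, \sum_j p j - p i != 0) ->
  weight_numbers n p q -> forall i, q i != 0.
Proof.
move=> n_gt0 sum_p1 p_neq weight_q i.
have N_gt1 := one_lt_card_of_sum_sub_neq0 p_neq i.
by rewrite weight_q !mulf_neq0 ?invr_eq0 ?pnatr_eq0 -?lt0n ?subn_gt0 // sum_p1 oner_eq0.
Qed.

End Frames.


Unset Implicit Arguments.

Theorem corollary4p2 (R : realType) (isreal : bool) (n N : nat)
  (p q : 'I_N -> R) (F : 'I_N -> 'cV[R[i]]_n) :
  (0 < n)%N -> (n <= N)%N ->
  probability_seq p ->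
  (forall i, \sum_j p j - p i != 0) ->
  weight_numbers n p q ->
  prob_uniform_parseval isreal q F ->
  [/\ opt_dual isreal q F 1 (canonical_dual F),
      (forall G, opt_dual isreal q F 1 G -> forall i, G i = canonical_dual F i) &
      (forall m, (1 <= m <= N)%N -> opt_dual isreal q F m (canonical_dual F))].
Proof.
move=> n_gt0 n_le_N [_ sum_p1] p_neq weight_q [parseval_F normF].
have weight_F i : q i * normv (F i) ^+ 2 = 1.
  by rewrite normF mulfV // (weight_numbers_neq0 n_gt0 sum_p1 p_neq weight_q).
have N_gt0 : (0 < N)%N := leq_trans n_gt0 n_le_N.
have optF := opt_dual1_self parseval_F weight_F N_gt0.
have uniqF := opt_dual1_eq parseval_F weight_F N_gt0.
rewrite (canonical_dual_parseval parseval_F.1.1 parseval_F.2).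
split=> [//| G /uniqF -> // | [//|m] _].
exact: opt_dual_of_unique1 optF uniqF m.
Qed.
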